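(* Let $f:\mathbb{F}_q^k\to\mathrm{Im}(f)$ with $|\mathrm{Im}(f)|\ge2$ be $d_d$-locally binary, where $d_d\ge1$, and suppose there exists a linear MDS $[n,k,d_d]$ code over $\mathbb{F}_q$ (so $d_d=n-k+1$). Then $r_f(k:d_d,d_d+1)=d_d$.
   Context: $d(\cdot,\cdot)$ is Hamming distance. $B_f(u,\rho)=\{f(u'):d(u,u')\le\rho\}$; $f$ is $\rho$-locally binary if $|B_f(u,\rho)|\le2$ for all $u$. For integers $0\le d_d\le d_f$, an $(f\!:d_d,d_f)$-FCC with redundancy $r$ is a systematic encoding $\mathfrak{C}_f(u)=(u,p_u)\in\mathbb{F}_q^{k+r}$ with $d(\mathfrak{C}_f(u_1),\mathfrak{C}_f(u_2))\ge d_d$ whenever $u_1\ne u_2$ and $\ge d_f$ whenever $f(u_1)\ne f(u_2)$; $r_f(k:d_d,d_f)$ is the minimum such $r$. *)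

From HB Require Import structures.
From mathcomp Require Import all_boot all_order all_algebra.
Set Implicit Arguments. Unset Strict Implicit. Unset Printing Implicit Defensive.
Import GRing.Theory.
Local Open Scope ring_scope.

Definition hamming (F : finFieldType) (m : nat) (x y : 'rV[F]_m) : nat :=
  #|[set i : 'I_m | x 0 i != y 0 i]|.

Definition hweight (F : finFieldType) (m : nat) (x : 'rV[F]_m) : nat :=
  #|[set i : 'I_m | x 0 i != 0]|.

Definition im_f (F : finFieldType) (k : nat) (Y : eqType)
  (f : 'rV[F]_k -> Y) : seq Y := undup [seq f u | u <- enum [set: 'rV[F]_k]].

Definition ball_f (F : finFieldType) (k : nat) (Y : eqType)
  (f : 'rV[F]_k -> Y) (u : 'rV[F]_k) (rho : nat) : seq Y :=
  undup [seq f u' | u' <- enum [set u' : 'rV[F]_k | (hamming u u' <= rho)%N]].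

Definition locally_binary (F : finFieldType) (k : nat) (Y : eqType)
  (f : 'rV[F]_k -> Y) (rho : nat) : Prop :=
  forall u, (size (ball_f f u rho) <= 2)%N.

Definition is_FCC (F : finFieldType) (k r : nat) (Y : eqType)
  (f : 'rV[F]_k -> Y) (dd df : nat) (p : 'rV[F]_k -> 'rV[F]_r) : Prop :=
  (forall u1 u2, u1 != u2 ->
     (dd <= hamming (row_mx u1 (p u1)) (row_mx u2 (p u2)))%N) /\
  (forall u1 u2, f u1 != f u2 ->
     (df <= hamming (row_mx u1 (p u1)) (row_mx u2 (p u2)))%N).

Definition FCC_exists (F : finFieldType) (k : nat) (Y : eqType)
  (f : 'rV[F]_k -> Y) (dd df r : nat) : Prop :=
  exists p : 'rV[F]_k -> 'rV[F]_r, is_FCC f dd df p.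

(* r_f(k : dd, df) = r, i.e. r is the minimum redundancy of such an FCC. *)
Definition optimal_redundancy (F : finFieldType) (k : nat) (Y : eqType)
  (f : 'rV[F]_k -> Y) (dd df r : nat) : Prop :=
  FCC_exists f dd df r /\ (forall r', FCC_exists f dd df r' -> (r <= r')%N).

(* The linear code generated by G : 'M_(k,n) is an [n,k,d] code:
   G has full row rank k and the minimum distance
   (= minimum weight of a nonzero codeword) is exactly d. *)
Definition linear_code_nkd (F : finFieldType) (n k d : nat)
  (G : 'M[F]_(k, n)) : Prop :=
  row_free G /\
  (forall c : 'rV[F]_n, (c <= G)%MS -> c != 0 -> (d <= hweight c)%N) /\
  (exists c : 'rV[F]_n, [/\ (c <= G)%MS, c != 0 & hweight c = d]).

Definition linear_MDS_code (F : finFieldType) (n k d : nat)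
  (G : 'M[F]_(k, n)) : Prop :=
  @linear_code_nkd F n k d G /\ (n + 1 = k + d)%N.

(* Join two messages by an edge when they are within distance [dd] and have
   different function values.  Local binarity forces all neighbours of a vertex
   to share one function value, so along any path the value alternates and
   each connected component is two-coloured by comparing [f u] with the value
   at the component's root.  Appending this colour bit to the redundancy of a
   systematic MDS code raises the distance of every edge from [dd] to [dd + 1];
   non-adjacent pairs with different values are already [dd + 1] apart in the
   message part.  Conversely two messages at distance 1 with different values
   force [dd + 1 <= 1 + r]. *)

From mathcomp Require Import all_boot all_order all_algebra.
Set Implicit Arguments. Unset Strict Implicit. Unset Printing Implicit Defensive.
Import GRing.Theory.
Local Open Scope ring_scope.

Section RootColouring.
Variables (T : finType) (Y : eqType) (f : T -> Y) (e : rel T).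
Hypothesis e_sym : symmetric e.
Hypothesis e_diff : forall u v, e u v -> f u != f v.
Hypothesis e_nbr : forall v u w, e v u -> e v w -> f u = f w.

Lemma f_last_path x p : path e x p ->
  f (last x p) = (if odd (size p) then f (head x p) else f x).
Proof.
elim: p x => [|z p IH] x //= /andP [exz pz].
rewrite (IH z pz); case: p IH pz => [|y p] IH pz //=.
case: (odd (size p)) => //=; move: pz => /= /andP [ezy _].
by apply: (e_nbr ezy); rewrite e_sym.
Qed.

Lemma f_connect r w : connect e r w -> f w = f r \/ exists2 h, e r h & f w = f h.
Proof.
move=> /connectP [p pp ->]; rewrite (f_last_path pp).
case: p pp => [|h p] /= ; first by left.
by move=> /andP [erh _]; case: (odd (size p)); [left | right; exists h].
Qed.

Definition root_colour u := f u == f (fingraph.root e u).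

Lemma root_colour_edge u v : e u v -> root_colour u != root_colour v.
Proof.
move=> euv; have cs := sym_connect_sym e_sym.
have ruv : fingraph.root e u = fingraph.root e v.
  by apply/(fingraph.rootP cs); apply: connect1.
rewrite /root_colour -ruv; set r := fingraph.root e u.
have cu : connect e r u by rewrite cs connect_root.
have cv : connect e r v by rewrite cs /r ruv connect_root.
move: (e_diff euv).
case: (f_connect cu) => [->|[h1 e1 ->]]; case: (f_connect cv) => [->|[h2 e2 ->]].
- by rewrite eqxx.
- by rewrite eqxx (eq_sym (f h2)) (negbTE (e_diff e2)).
- by rewrite eqxx (eq_sym (f h1)) (negbTE (e_diff e1)).
- by rewrite (e_nbr e1 e2) eqxx.
Qed.

End RootColouring.

Section Hamming.
Variable F : finFieldType.

Lemma hamming_sum m (x y : 'rV[F]_m) :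
  hamming x y = (\sum_(i < m) (x ord0 i != y ord0 i : nat))%N.
Proof.
rewrite /hamming -sum1dep_card big_mkcond /=.
by apply: eq_bigr => i _; case: (x ord0 i != y ord0 i).
Qed.

Lemma hamming_row_mx m1 m2 (a a' : 'rV[F]_m1) (b b' : 'rV[F]_m2) :
  hamming (row_mx a b) (row_mx a' b') = (hamming a a' + hamming b b')%N.
Proof.
rewrite !hamming_sum big_split_ord /=.
by congr (_ + _); apply: eq_bigr => i _; rewrite ?row_mxEl ?row_mxEr.
Qed.

Lemma hamming_le_dim m (x y : 'rV[F]_m) : (hamming x y <= m)%N.
Proof. by apply: leq_trans (max_card _) _; rewrite card_ord. Qed.

Lemma hamming_weight m (x y : 'rV[F]_m) : hamming x y = hweight (x - y).
Proof. by apply: eq_card => i; rewrite !inE !mxE subr_eq0. Qed.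

Lemma hammingC m (x y : 'rV[F]_m) : hamming x y = hamming y x.
Proof. by apply: eq_card => i; rewrite !inE eq_sym. Qed.

Lemma hamming_xx m (x : 'rV[F]_m) : hamming x x = 0%N.
Proof. by rewrite hamming_sum big1 // => i _; rewrite eqxx. Qed.

Lemma hamming_const (a b : F) :
  hamming (const_mx a : 'rV[F]_1) (const_mx b) = (a != b).
Proof. by rewrite hamming_sum big_ord1 !mxE. Qed.

Lemma hamming1_path m (x y : 'rV[F]_m) : (1 < hamming x y)%N ->
  exists2 z, (hamming x z <= 1)%N & (hamming z y < hamming x y)%N.
Proof.
move=> /ltnW; rewrite card_gt0 => /set0Pn [i]; rewrite inE => xyi.
exists (\row_j (if j == i then y 0 j else x 0 j)).
  apply: leq_trans (_ : _ <= #|[set i]|)%N _; last by rewrite cards1.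
  apply: subset_leq_card; apply/subsetP => j.
  by rewrite !inE mxE; case: (j == i) => //; rewrite eqxx.
rewrite /hamming [X in (_ < X)%N](cardsD1 i) inE xyi add1n ltnS.
apply: subset_leq_card; apply/subsetP => j; rewrite !inE mxE.
by case: (j == i) => //=; rewrite eqxx.
Qed.

End Hamming.

Section Messages.
Variables (F : finFieldType) (k : nat) (Y : eqType) (f : 'rV[F]_k -> Y).

Lemma im_f_nonconstant : (2 <= size (im_f f))%N -> exists a b, f a != f b.
Proof.
rewrite /im_f; have := undup_uniq [seq f u | u <- enum [set: 'rV[F]_k]].
have mem y : y \in undup [seq f u | u <- enum [set: 'rV[F]_k]] -> exists u, y = f u.
  by rewrite mem_undup => /mapP [u _ ->]; exists u.
case: (undup _) mem => [|y1 [|y2 s]] mem //= /andP [ny _] _; move: ny.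
have [u1 ->] := mem y1 (mem_head _ _).
have [u2 ->] : exists u, y2 = f u by apply: mem; rewrite !inE eqxx orbT.
by move=> ny; exists u1, u2; apply: contra ny => /eqP ->; rewrite inE eqxx.
Qed.

Lemma nonconstant_at_distance1 a b : f a != f b ->
  exists u1 u2, (hamming u1 u2 <= 1)%N /\ f u1 != f u2.
Proof.
move: {2}(hamming a b) (leqnn (hamming a b)) => n.
elim: n b => [|n IH] b hab fab; first by exists a, b; rewrite (leq_trans hab).
have [h1|h1] := leqP (hamming a b) 1; first by exists a, b.
rewrite hammingC in h1 hab; have [z bz za] := hamming1_path h1.
have [fzb|fzb] := eqVneq (f z) (f b); last by exists z, b; rewrite hammingC.
by apply: (IH z); rewrite ?fzb // hammingC -ltnS (leq_trans za).
Qed.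

Lemma FCC_redundancy_lb dd df r :
  (2 <= size (im_f f))%N -> FCC_exists f dd df r -> (df <= r.+1)%N.
Proof.
move=> /im_f_nonconstant [a [b /nonconstant_at_distance1 [u1 [u2 [h1 f12]]]]].
move=> [p [_ /(_ _ _ f12)]]; rewrite hamming_row_mx => h.
by apply: leq_trans h _; rewrite -add1n leq_add ?hamming_le_dim.
Qed.

Lemma locally_binary_nbr rho v u w : locally_binary f rho ->
  (hamming v u <= rho)%N -> (hamming v w <= rho)%N ->
  f v != f u -> f v != f w -> f u = f w.
Proof.
move=> lb hu hw fu fw; apply/eqP; apply: contraTT (lb v) => fuw; rewrite -ltnNge.
have inball x : (hamming v x <= rho)%N -> f x \in ball_f f v rho.
  by move=> h; rewrite mem_undup; apply: map_f; rewrite mem_enum inE.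
apply: (@leq_trans (size [:: f v; f u; f w])) => //.
apply: uniq_leq_size; first by rewrite /= !inE negb_or fu fw fuw.
by move=> y; rewrite !inE => /or3P [] /eqP ->; apply: inball; rewrite ?hamming_xx.
Qed.

Section ColourBit.
Variables (rho r : nat) (enc : 'rV[F]_k -> 'rV[F]_r).
Hypothesis f_lb : locally_binary f rho.
Hypothesis enc_dist : forall u1 u2, u1 != u2 ->
  (rho <= hamming (row_mx u1 (enc u1)) (row_mx u2 (enc u2)))%N.

Definition conflict := [rel u v | (hamming u v <= rho)%N && (f u != f v)].

Definition colour_bit u : 'rV[F]_1 := const_mx (root_colour f conflict u)%:R.

Lemma colour_bit_conflict u v : conflict u v ->
  hamming (colour_bit u) (colour_bit v) = 1%N.
Proof.
have csym : symmetric conflict by move=> x y; rewrite /= hammingC eq_sym.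
have cdiff x y : conflict x y -> f x != f y by case/andP.
have cnbr x y z : conflict x y -> conflict x z -> f y = f z.
  by move=> /andP [hy fy] /andP [hz fz]; apply: (locally_binary_nbr f_lb hy hz).
move=> /(root_colour_edge csym cdiff cnbr); rewrite hamming_const.
by case: (root_colour _ _ u); case: (root_colour _ _ v);
  rewrite //= ?oner_neq0 // eq_sym oner_neq0.
Qed.

Definition colour_enc u : 'rV[F]_(1 + r) := row_mx (colour_bit u) (enc u).

Lemma colour_enc_dist u1 u2 :
  hamming (row_mx u1 (colour_enc u1)) (row_mx u2 (colour_enc u2)) =
  (hamming (row_mx u1 (enc u1)) (row_mx u2 (enc u2))
     + hamming (colour_bit u1) (colour_bit u2))%N.
Proof. by rewrite /colour_enc !hamming_row_mx addnA addnAC. Qed.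

Lemma colour_enc_FCC : is_FCC f rho rho.+1 colour_enc.
Proof.
split=> u1 u2 => [u12|fu12].
  by rewrite colour_enc_dist (leq_trans (enc_dist u12)) ?leq_addr.
have u12 : u1 != u2 by apply: contra fu12 => /eqP ->.
have [near|far] := leqP (hamming u1 u2) rho.
  have c12 : conflict u1 u2 by rewrite /= near fu12.
  by rewrite colour_enc_dist colour_bit_conflict // addn1 ltnS enc_dist.
by rewrite hamming_row_mx (leq_trans far) ?leq_addr.
Qed.

End ColourBit.

End Messages.

Lemma systematic_encoder (F : finFieldType) k m (G : 'M[F]_(k, k + m)) :
  row_free G -> (forall c, (c <= G)%MS -> c != 0 -> (m < hweight c)%N) ->
  exists enc : 'rV[F]_k -> 'rV[F]_m, forall u1 u2, u1 != u2 ->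
    (m < hamming (row_mx u1 (enc u1)) (row_mx u2 (enc u2)))%N.
Proof.
move=> freeG minG.
have code_dist x y : x != y -> (m < hamming (x *m G) (y *m G))%N.
  move=> xy; rewrite hamming_weight -mulmxBl minG ?submxMl //.
  apply: contra xy => /eqP xyG; rewrite -subr_eq0; apply/eqP.
  by apply: (row_free_inj freeG); rewrite xyG mul0mx.
(* Codewords with equal first [k] coordinates are at most [m] apart, so the
   first [k] coordinates form an information set. *)
have info_inj : injective (fun x : 'rV[F]_k => lsubmx (x *m G)).
  move=> x y lxy; apply/eqP; apply: contraLR (leqnn 0) => /code_dist.
  rewrite -(hsubmxK (x *m G)) -(hsubmxK (y *m G)) hamming_row_mx lxy.
  by rewrite hamming_xx add0n ltnNge hamming_le_dim.
have [g gK Kg] := injF_bij info_inj.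
have cwE u : row_mx u (rsubmx (g u *m G)) = g u *m G by rewrite -{1}(Kg u) hsubmxK.
exists (fun u => rsubmx (g u *m G)) => u1 u2 u12; rewrite !cwE code_dist //.
by apply: contra u12 => /eqP /(congr1 (fun x => lsubmx (x *m G))); rewrite !Kg => ->.
Qed.

Theorem corollary10 (F : finFieldType) (k dd : nat) (Y : eqType)
  (f : 'rV[F]_k -> Y) :
  (2 <= size (@im_f F k Y f))%N ->
  (1 <= dd)%N ->
  @locally_binary F k Y f dd ->
  (exists (n : nat) (G : 'M[F]_(k, n)), @linear_MDS_code F n k dd G) ->
  @optimal_redundancy F k Y f dd dd.+1 dd.
Proof.
move=> im2; case: dd => [//|d] _ lb [n [G [[freeG [minG _]] En]]].
have {}En : n = (k + d)%N by move: En; rewrite addn1 addnS => -[].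
subst n; have [enc enc_dist] := systematic_encoder freeG minG.
split; first by exists (colour_enc f d.+1 enc); apply: colour_enc_FCC.
by move=> r' /(FCC_redundancy_lb im2).
Qed.
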